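(* Let $r$ be an odd prime and $\mu_i=(-1)^iA_r^{i(i+2)}$. If $0\le i<j\le\frac{r-3}{2}$, then $\mu_i^2-\mu_j^2\sim\mu_i-\mu_j\sim 1-A_r^2$.
   Context: $\alpha_r=e^{2\pi i/(4r)}$, $A_r=\alpha_r^2$; $\mathcal{O}_r=\mathbb{Z}[A_r]$ if $r\equiv-1\pmod 4$ and $\mathcal{O}_r=\mathbb{Z}[\alpha_r]$ if $r\equiv 1\pmod 4$. $a\sim b$ means $a/b$ is a unit of $\mathcal{O}_r$. *)

From mathcomp Require Import all_boot all_order all_algebra all_field.
Set Implicit Arguments. Unset Strict Implicit. Unset Printing Implicit Defensive.
Import GRing.Theory Num.Theory.
Local Open Scope ring_scope.

(* alpha_r = e^{2 pi i/(4r)}: in algC, n.-root (-1) is the (2n)-th root of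
   unity with minimal non-negative argument, i.e. e^{i pi / n}. *)
Definition alpha_r (r : nat) : algC := (2 * r)%N.-root (-1).
Definition A_r (r : nat) : algC := alpha_r r ^+ 2.

Definition O_gen (r : nat) : algC :=
  if (r %% 4 == 1)%N then alpha_r r else A_r r.

Definition in_Zadj (g z : algC) : Prop :=
  exists p : {poly int}, z = (map_poly (fun n : int => n%:~R) p).[g].

Definition in_O (r : nat) (z : algC) : Prop := in_Zadj (O_gen r) z.

Definition unit_O (r : nat) (u : algC) : Prop :=
  u != 0 /\ in_O r u /\ in_O r u^-1.

Definition assoc_O (r : nat) (a b : algC) : Prop :=
  b != 0 /\ unit_O r (a / b).

Definition mu_r (r i : nat) : algC := (-1) ^+ i * A_r r ^+ (i * (i + 2)).

From mathcomp Require Import all_boot all_order all_algebra all_field.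
From mathcomp Require Import zify.
Set Implicit Arguments. Unset Strict Implicit. Unset Printing Implicit Defensive.
Import Order.TTheory GRing.Theory Num.Theory.
Local Open Scope ring_scope.

(* w := A_r^2 is a primitive r-th root of unity (alpha_r^4 <> 1 because
   rootC picks the root of maximal real part) and mu_i = w^(i(i+r+2)/2), so
   mu_j = mu_i x with x = w^m, 2m = (j - i)(i + j + 2 + r); the bounds on i
   and j make m prime to r, hence x and x^2 are primitive as well.  Then
   mu_i^2 - mu_j^2 = mu_i^2 (1 - x^2) and mu_i - mu_j = mu_i (1 - x) with the
   root of unity mu_i a unit, and 1 - y ~ 1 - z for primitive roots y, z of
   the same order, as each quotient is a geometric sum in y or z. *)

Section IntegralAdjunction.
Variable g : algC.

Lemma Zadj_gen n : in_Zadj g (g ^+ n).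
Proof. by exists 'X^n; rewrite map_polyXn hornerXn. Qed.

Lemma Zadj1 : in_Zadj g 1.
Proof. by exists 1; rewrite rmorph1 hornerC. Qed.

Lemma ZadjD x y : in_Zadj g x -> in_Zadj g y -> in_Zadj g (x + y).
Proof. by move=> [p ->] [q ->]; exists (p + q); rewrite rmorphD hornerD. Qed.

Lemma ZadjM x y : in_Zadj g x -> in_Zadj g y -> in_Zadj g (x * y).
Proof. by move=> [p ->] [q ->]; exists (p * q); rewrite rmorphM hornerM. Qed.

Lemma ZadjX x n : in_Zadj g x -> in_Zadj g (x ^+ n).
Proof.
move=> gx; elim: n => [|n IHn]; first by rewrite expr0; apply: Zadj1.
by rewrite exprS; apply: ZadjM.
Qed.

Lemma Zadj_sum n (F : 'I_n -> algC) :
  (forall k, in_Zadj g (F k)) -> in_Zadj g (\sum_(k < n) F k).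
Proof.
move=> gF; apply: (big_ind (in_Zadj g)) => // [|x y]; last exact: ZadjD.
by exists 0; rewrite rmorph0 horner0.
Qed.

Lemma dvd_sub1_root_of_unity n z y :
  in_Zadj g z -> n.-primitive_root z -> y ^+ n = 1 ->
  exists2 s, in_Zadj g s & 1 - y = (1 - z) * s.
Proof.
move=> gz zprim /(prim_rootP zprim) [k ->].
exists (\sum_(l < k) z ^+ l); first by apply: Zadj_sum => l; apply: ZadjX.
by rewrite -[1 - z]opprB mulNr -subrX1 opprB.
Qed.

End IntegralAdjunction.

Section UnitsOfO.
Variable r : nat.

Lemma in_O_A_r n : in_O r (A_r r ^+ n).
Proof.
rewrite /in_O /O_gen; case: ifP => _; last exact: Zadj_gen.
by rewrite /A_r -exprM; apply: Zadj_gen.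
Qed.

Lemma unit_O_mul_eq1 u v : in_O r u -> in_O r v -> u * v = 1 -> unit_O r u.
Proof.
move=> Ou Ov uv; have u0 : u != 0.
  by apply: contra_eq_neq uv => ->; rewrite mul0r eq_sym oner_eq0.
by split; rewrite // -[u^-1]mulr1 -uv mulKf.
Qed.

Lemma unit_O_root_of_unity n z : (0 < n)%N -> in_O r z -> z ^+ n = 1 -> unit_O r z.
Proof.
move=> n_gt0 Oz zn; apply: (unit_O_mul_eq1 (v := z ^+ n.-1)) => //; first exact: ZadjX.
by rewrite -exprS prednK.
Qed.

Lemma unit_O1 : unit_O r 1.
Proof. by rewrite /unit_O invr1 oner_neq0; split=> //; split; apply: Zadj1. Qed.

Lemma unit_OV u : unit_O r u -> unit_O r u^-1.
Proof. by move=> [u0 [Ou Ou']]; rewrite /unit_O invr_eq0 invrK. Qed.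

Lemma unit_OM u v : unit_O r u -> unit_O r v -> unit_O r (u * v).
Proof.
move=> [u0 [Ou Ou']] [v0 [Ov Ov']].
by split; [rewrite mulf_neq0 | split; rewrite ?invfM; apply: ZadjM].
Qed.

Lemma assoc_OM u v a b : unit_O r u -> unit_O r v -> assoc_O r a b ->
  assoc_O r (u * a) (v * b).
Proof.
move=> Uu Uv [b0 Uab]; have [v0 _] := Uv.
split; first by rewrite mulf_neq0.
rewrite invfM mulrACA; apply: unit_OM Uab.
by apply: unit_OM Uu (unit_OV Uv).
Qed.

Lemma assoc_O_sub1_prim_roots n y z : (1 < n)%N ->
  n.-primitive_root y -> n.-primitive_root z -> in_O r y -> in_O r z ->
  assoc_O r (1 - y) (1 - z).
Proof.
move=> n_gt1 yprim zprim Oy Oz.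
have [s Os ys] := dvd_sub1_root_of_unity Oz zprim (prim_expr_order yprim).
have [t Ot zt] := dvd_sub1_root_of_unity Oy yprim (prim_expr_order zprim).
have z1 : 1 - z != 0.
  by rewrite subr_eq0 eq_sym -[z in z == 1]expr1 -(prim_order_dvd zprim) dvdn1 gtn_eqF.
split; rewrite // ys [_ * s]mulrC mulfK //.
apply: (unit_O_mul_eq1 (v := t)) => //; apply: (mulfI z1).
by rewrite mulr1 mulrA -ys -zt.
Qed.

End UnitsOfO.

Lemma exists_rootN1_Re_gt0 r : odd r -> (1 < r)%N ->
  exists y : algC, [/\ y ^+ (2 * r) = -1, 0 <= 'Im y & 0 < 'Re y].
Proof.
move=> r_odd r_gt1; have r_gt0 := ltnW r_gt1.
have [w wprim] := C_prim_root_exists r_gt0; have wr := prim_expr_order wprim.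
have Imw : 'Im w != 0.
  apply/eqP => /Creal_ImP wR.
  have : (w ^+ 2) ^+ r == 1 by rewrite -exprM mulnC exprM wr expr1n.
  rewrite pexpr_eq1 ?real_exprn_even_ge0 // -(prim_order_dvd wprim).
  by move/(dvdn_leq (isT : (0 < 2)%N)); lia.
(* i w is a (2r)-th root of -1 off the imaginary axis; fix the signs of its
   real and imaginary parts by negation and conjugation. *)
have [y0 y0N Rey0] : exists2 y0 : algC, y0 ^+ (2 * r) = -1 & 0 < 'Re y0.
  have iwN : ('i * w) ^+ (2 * r) = -1.
    by rewrite exprMn exprM sqrCi mulnC exprM wr expr1n mulr1 -signr_odd r_odd.
  case: (real_ltgt0P (Creal_Im w)) Imw => // Im_sgn _.
    exists (- ('i * w)); first by rewrite exprM sqrrN -exprM.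
    by rewrite raddfN /= ReMil opprK.
  by exists ('i * w); rewrite // ReMil oppr_gt0.
have [Imy0 | /ltW Imy0] := real_ge0P (Creal_Im y0); first by exists y0.
by exists y0^*; rewrite -rmorphXn y0N rmorphN rmorph1 Re_conj Im_conj oppr_ge0.
Qed.

Lemma Re_alpha_r_gt0 r : odd r -> (1 < r)%N -> 0 < 'Re (alpha_r r).
Proof.
move=> r_odd r_gt1; have [y [yN Imy Rey]] := exists_rootN1_Re_gt0 r_odd r_gt1.
by apply: lt_le_trans Rey (rootC_Re_max _ yN Imy); lia.
Qed.

Lemma A_r_expr r : (0 < r)%N -> A_r r ^+ r = -1.
Proof. by move=> r_gt0; rewrite /A_r -exprM rootCK // muln_gt0. Qed.

Lemma prim_root_A_r_sqr r : prime r -> odd r -> r.-primitive_root (A_r r ^+ 2).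
Proof.
move=> r_prime r_odd; have r_gt1 := prime_gt1 r_prime; have r_gt0 := ltnW r_gt1.
have wr : (A_r r ^+ 2) ^+ r = 1.
  by rewrite -exprM mulnC exprM A_r_expr // sqrrN expr1n.
have [m mprim /(primeP r_prime).2 /orP[] /eqP m_eq] := prim_order_exists r_gt0 wr;
  last by rewrite m_eq in mprim.
have A2 : A_r r ^+ 2 = 1 by rewrite -(prim_expr_order mprim) m_eq.
(* r is odd, so A_r = A_r^r = -1, i.e. alpha_r = +-i, which has real part 0 *)
have A1 : A_r r = -1.
  rewrite -(A_r_expr r_gt0) -[LHS]mulr1 -(expr1n _ r./2) -A2 -exprM -exprS.
  by congr (_ ^+ _); rewrite -[RHS]odd_double_half r_odd -muln2 mulnC.
have := Re_alpha_r_gt0 r_odd r_gt1.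
have : alpha_r r ^+ 2 == 'i ^+ 2 by rewrite sqrCi -A1.
rewrite eqf_sqr => /orP[] /eqP ->; first by rewrite Re_i ltxx.
by rewrite raddfN /= Re_i oppr0 ltxx.
Qed.

Definition mu_exp (r n : nat) : nat := (n * (n + r + 2)) %/ 2.

Lemma mu_expK r n : odd r -> (mu_exp r n * 2 = n * (n + r + 2))%N.
Proof.
move=> r_odd; rewrite divnK // dvdn2 oddM !oddD r_odd /=.
by case: (odd n).
Qed.

Lemma leq_mu_exp r m n : (m <= n)%N -> (mu_exp r m <= mu_exp r n)%N.
Proof. by move=> le_mn; apply/leq_div2r/leq_mul; rewrite // !leq_add2r. Qed.

Lemma mu_r_exp r n : (0 < r)%N -> odd r -> mu_r r n = (A_r r ^+ 2) ^+ mu_exp r n.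
Proof.
move=> r_gt0 r_odd; rewrite /mu_r -(A_r_expr r_gt0) -!exprM -exprD.
by congr (_ ^+ _); have := mu_expK n r_odd; nia.
Qed.

(* 2 (mu_exp j - mu_exp i) = (j - i) (i + j + 2 + r), and r divides neither
   factor: 0 < j - i < r and 0 < i + j + 2 < r. *)
Lemma coprime_mu_exp_sub r i j : prime r -> odd r -> (i < j)%N ->
  (j <= (r - 3) %/ 2)%N -> coprime (mu_exp r j - mu_exp r i) r.
Proof.
move=> r_prime r_odd lt_ij; have r_gt1 := prime_gt1 r_prime.
rewrite leq_divRL // => j_le; rewrite coprime_sym prime_coprime //.
have := mu_expK i r_odd; have := mu_expK j r_odd; have := leq_mu_exp r (ltnW lt_ij).
set m := (mu_exp r j - mu_exp r i)%N => le_ij Kj Ki.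
have m2 : (m * 2 = (j - i) * (i + j + 2 + r))%N by rewrite /m; nia.
apply/negP => /(dvdn_mulr 2); rewrite m2 Euclid_dvdM // dvdn_addl //.
by case/orP => /dvdn_leq; lia.
Qed.

Theorem lemma7p1 (r i j : nat) :
  prime r -> odd r -> (i < j)%N -> (j <= (r - 3) %/ 2)%N ->
  assoc_O r (mu_r r i ^+ 2 - mu_r r j ^+ 2) (mu_r r i - mu_r r j) /\
  assoc_O r (mu_r r i - mu_r r j) (1 - A_r r ^+ 2).
Proof.
move=> r_prime r_odd lt_ij j_le; have r_gt1 := prime_gt1 r_prime.
have r_gt0 := ltnW r_gt1; set w := A_r r ^+ 2.
have wprim : r.-primitive_root w := prim_root_A_r_sqr r_prime r_odd.
have Ow n : in_O r (w ^+ n) by rewrite -exprM; apply: in_O_A_r.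
have m_coprime := coprime_mu_exp_sub r_prime r_odd lt_ij j_le.
set x := w ^+ (mu_exp r j - mu_exp r i).
have xprim : r.-primitive_root x by rewrite prim_root_exp_coprime.
have x2prim : r.-primitive_root (x ^+ 2).
  by rewrite -exprM prim_root_exp_coprime // coprimeMl m_coprime coprime2n.
have mu_i_unit : unit_O r (mu_r r i).
  rewrite mu_r_exp //; apply: (unit_O_root_of_unity r_gt0) => //.
  by rewrite exprAC (prim_expr_order wprim) expr1n.
have mu_j : mu_r r j = mu_r r i * x.
  by rewrite !mu_r_exp // -exprD subnKC // leq_mu_exp // ltnW.
have sub_mul a b : a - a * b = a * (1 - b) by rewrite mulrBr mulr1.
rewrite mu_j [(_ * x) ^+ 2]exprMn !sub_mul -[1 - w]mul1r.
split; apply: assoc_OM => //.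
- by rewrite expr2; apply: unit_OM.
- apply: (assoc_O_sub1_prim_roots r_gt1 x2prim xprim); last exact: Ow.
  by rewrite /x -exprM; apply: Ow.
- exact: unit_O1.
- apply: (assoc_O_sub1_prim_roots r_gt1 xprim wprim); first exact: Ow.
  by rewrite -[w]expr1; apply: Ow.
Qed.
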